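(* Let $\mathfrak n$ be a finite-dimensional real non-singular 2-step nilpotent Lie algebra. Then $\mathfrak n$ admits no ad-invariant metric.
   Context: An ad-invariant metric on a Lie algebra $\mathfrak g$ is a non-degenerate symmetric bilinear form $\langle\,,\,\rangle$ on $\mathfrak g$ (not necessarily positive definite) satisfying $\langle [x,y],z\rangle+\langle y,[x,z]\rangle=0$ for all $x,y,z\in\mathfrak g$. A Lie algebra $\mathfrak n$ is 2-step nilpotent if $[\mathfrak n,\mathfrak n]\neq 0$ and $[\mathfrak n,[\mathfrak n,\mathfrak n]]=0$; then $\mathrm{ad}_x$ maps $\mathfrak n$ into the center $\mathfrak z$ of $\mathfrak n$ for every $x$. A 2-step nilpotent Lie algebra $\mathfrak n$ with center $\mathfrak z$ is called non-singular if for every $x\in\mathfrak n\setminus\mathfrak z$ the map $\mathrm{ad}_x:\mathfrak n\to\mathfrak z$ is surjective. *)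

From HB Require Import structures.
From mathcomp Require Import all_boot all_order all_algebra.
From mathcomp Require Import reals.
Set Implicit Arguments. Unset Strict Implicit. Unset Printing Implicit Defensive.
Import Order.TTheory GRing.Theory Num.Theory.
Local Open Scope ring_scope.

Section LieDefs.
Variables (R : realType) (V : vectType R).

Definition is_lie_bracket (br : V -> V -> V) : Prop :=
  [/\ (forall (a : R) (x y z : V), br (a *: x + y) z = a *: br x z + br y z),
      (forall (a : R) (x y z : V), br x (a *: y + z) = a *: br x y + br x z),
      (forall x : V, br x x = 0) &
      (forall x y z : V, br x (br y z) + br y (br z x) + br z (br x y) = 0)].

Definition in_center (br : V -> V -> V) (x : V) : Prop :=
  forall y : V, br x y = 0.

Definition two_step_nilpotent (br : V -> V -> V) : Prop :=
  (exists x y : V, br x y <> 0) /\ (forall x y z : V, br x (br y z) = 0).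

Definition nonsingular (br : V -> V -> V) : Prop :=
  forall x : V, ~ in_center br x ->
    forall z : V, in_center br z -> exists y : V, br x y = z.

Definition ad_invariant_metric (br : V -> V -> V) (B : V -> V -> R) : Prop :=
  [/\ (forall (a : R) (x y z : V), B (a *: x + y) z = a * B x z + B y z),
      (forall x y : V, B x y = B y x),
      (forall x : V, (forall y : V, B x y = 0) -> x = 0) &
      (forall x y z : V, B (br x y) z + B y (br x z) = 0)].

End LieDefs.

From mathcomp Require Import all_boot all_order all_algebra.
From mathcomp Require Import reals.
Set Implicit Arguments. Unset Strict Implicit. Unset Printing Implicit Defensive.
Import GRing.Theory.
Local Open Scope ring_scope.

(* If [x] is not central, non-singularity makes every central element of the
   form [[x, y]], and invariance gives [<x, [x, y]> = -<[x, x], y> = 0]; so [x]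
   is orthogonal to the centre, which contains [[n, n]].  By invariance again
   [<[a, x], b> = -<x, [a, b]> = 0] for all [b], so [[a, x] = 0] by
   non-degeneracy, i.e. [x] is central after all.  But [[n, n] <> 0]
   provides a non-central [x]. *)

Section AdInvariantMetric.
Variables (R : realType) (V : vectType R) (br : V -> V -> V) (B : V -> V -> R).
Hypotheses (lie_br : is_lie_bracket br) (metricB : ad_invariant_metric br B).

Lemma lie_bracket_anticomm (u v : V) : br u v = - br v u.
Proof.
case: lie_br => linl linr alt _.
have addl w1 w2 w : br (w1 + w2) w = br w1 w + br w2 w.
  by have := linl 1 w1 w2 w; rewrite !scale1r.
have addr w w1 w2 : br w (w1 + w2) = br w w1 + br w w2.
  by have := linr 1 w w1 w2; rewrite !scale1r.
apply/eqP; rewrite -addr_eq0; apply/eqP.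
by have := alt (u + v); rewrite addl !addr !alt add0r addr0.
Qed.

Lemma metric0l (w : V) : B 0 w = 0.
Proof.
case: metricB => linB _ _ _.
have := linB 1 0 0 w; rewrite scale1r addr0 mul1r -{1}[B 0 w]addr0.
by move/addrI.
Qed.

Lemma metric_ad_self (x y : V) : B x (br x y) = 0.
Proof.
case: lie_br => _ _ alt _; case: metricB => _ _ _ inv.
by have := inv x x y; rewrite alt metric0l add0r.
Qed.

Lemma two_step_derived_in_center (a b : V) :
  two_step_nilpotent br -> in_center br (br a b).
Proof.
by move=> [_ nil2] w; rewrite lie_bracket_anticomm nil2 oppr0.
Qed.

Lemma nonsingular_orth_center (x z : V) :
  nonsingular br -> ~ in_center br x -> in_center br z -> B x z = 0.
Proof.
move=> ns ncx cz; have [y <-] := ns x ncx z cz.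
exact: metric_ad_self.
Qed.

Lemma orth_derived_in_center (x : V) :
  (forall a b : V, B x (br a b) = 0) -> in_center br x.
Proof.
case: metricB => _ _ nondeg inv orth_x y.
rewrite lie_bracket_anticomm; apply/eqP; rewrite oppr_eq0; apply/eqP.
by apply: nondeg => b; have := inv y x b; rewrite orth_x addr0.
Qed.

End AdInvariantMetric.

Theorem mainTheorem2 (R : realType) (V : vectType R) (br : V -> V -> V) :
  is_lie_bracket br -> two_step_nilpotent br -> nonsingular br ->
  ~ (exists B : V -> V -> R, ad_invariant_metric br B).
Proof.
move=> lie_br nil ns [B metricB].
have [[x [y ncxy]] _] := nil.
have ncx : ~ in_center br x by move=> cx; exact/ncxy/cx.
apply: (ncx); apply: (orth_derived_in_center lie_br metricB) => a b.
apply: (nonsingular_orth_center lie_br metricB ns ncx).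
exact: two_step_derived_in_center lie_br _ _ nil.
Qed.
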